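(* Let $K,L,T,r$ be positive integers with $L\le K$ and $1\le r\le\min\{K,T\}$, and let $(\alpha,\beta)$ be the $\mathsf{GASP}_r$ vectors. For $1\le i\le T$ let $P_i=\{\alpha_k+\beta_c: 1\le k\le K+i-1,\ 1\le c\le L+T\}$, $L_i=((\alpha_{\mathrm s})_i+\operatorname{Set}(\beta_{\mathrm p}))\cap P_i$ and $R_i=((\alpha_{\mathrm s})_i+\operatorname{Set}(\beta_{\mathrm s}))\cap P_i$. Then $|L_i|=\min\{L,2+\lfloor (T-1-i)/K\rfloor\}$ if $1\le i\le r$, and $|L_i|=L$ if $r+1\le i\le T$; and $|R_i|=\max\{0,K+T-KL-1\}$ if $i=1$, $|R_i|=\max\{0,T-K+r-1\}$ if $i\ge2$ and $i\equiv1\pmod r$, and $|R_i|=T-1$ if $i\not\equiv1\pmod r$.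
   Context: The code $\mathsf{GASP}_r$ ($L\le K$, $1\le r\le\min\{K,T\}$) consists of the vectors $\alpha=(\alpha_{\mathrm p}\mid\alpha_{\mathrm s})$ (entries $\alpha_1,\ldots,\alpha_{K+T}$) and $\beta=(\beta_{\mathrm p}\mid\beta_{\mathrm s})$ (entries $\beta_1,\ldots,\beta_{L+T}$) with $\alpha_{\mathrm p}=(0,1,\ldots,K-1)$; $\alpha_{\mathrm s}$ the $T$ smallest elements of $\{KL+j+Kt: 0\le j\le r-1,\ t\in\mathbb{Z}_{\ge0}\}$ in increasing order (so $(\alpha_{\mathrm s})_i=\alpha_{K+i}$); $\beta_{\mathrm p}=(0,K,\ldots,K(L-1))$; $\beta_{\mathrm s}=(KL,\ldots,KL+T-1)$. $\operatorname{Set}(v)$ is the set of entries of $v$ and $x+B=\{x+b:b\in B\}$. (Thus $L_i$, $R_i$ are the integers in the first $L$, resp. last $T$, entries of row $K+i$ of the table $(\alpha_k+\beta_c)_{k,c}$ that already appear in its first $K+i-1$ rows.) *)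

From mathcomp Require Import all_boot all_order all_algebra.
Set Implicit Arguments. Unset Strict Implicit. Unset Printing Implicit Defensive.

(* GASP_r code vectors; all indices are 1-based, as in the paper. *)

(* membership in {KL + j + Kt : 0 <= j <= r-1, t >= 0}; for x < B it suffices
   to range t over t < B (since x >= K t >= t when K >= 1). *)
Definition inS (K L r B : nat) (x : nat) : bool :=
  has (fun j => has (fun t => x == K * L + j + K * t) (iota 0 B)) (iota 0 r).

(* bound: the T elements KL + K t (t < T) lie below K*L + K*T, so the first T
   elements (in increasing order) of the set below this bound are exactly the
   T smallest elements of the set. *)
Definition gasp_bound (K L T : nat) : nat := K * L + K * T.

Definition alpha_s (K L T r : nat) (i : nat) : nat :=
  nth 0 [seq x <- iota 0 (gasp_bound K L T) | inS K L r (gasp_bound K L T) x] i.-1.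

Definition alpha (K L T r : nat) (k : nat) : nat :=
  if k <= K then k.-1 else alpha_s K L T r (k - K).

Definition beta (K L T : nat) (c : nat) : nat :=
  if c <= L then K * c.-1 else K * L + (c - L).-1.

Definition Pset (K L T r i : nat) : seq nat :=
  [seq alpha K L T r k + beta K L T c | k <- iota 1 (K + i - 1), c <- iota 1 (L + T)].

Definition Lset (K L T r i : nat) : seq nat :=
  undup [seq x <- [seq alpha_s K L T r i + beta K L T c | c <- iota 1 L]
        | x \in Pset K L T r i].

Definition Rset (K L T r i : nat) : seq nat :=
  undup [seq x <- [seq alpha_s K L T r i + beta K L T c | c <- iota (L + 1) T]
        | x \in Pset K L T r i].

From mathcomp Require Import all_boot all_order all_algebra.
From mathcomp Require Import zify.

(* Write n = i - 1.  The secret point (alpha_s)_(n+1) is KL + K (n / r) + n mod r,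
   a strictly increasing function of n.  The first K rows of the table
   (alpha_k + beta_c) cover exactly the interval [0, KL + K + T - 2], and row
   K + j + 1 is (alpha_s)_(j+1) + Set(beta).
   For L_i: if n < r, a candidate KL + n + Kc can only lie in that interval, since
   the earlier secret rows give other residues mod K or larger values; if n >= r,
   then (alpha_s)_(n+1) = (alpha_s)_(n+1-r) + K, so every candidate already
   appears r rows earlier.
   For R_i with i >= 2: as alpha_s is increasing, (alpha_s)_i + KL + m lies in P_i
   iff it lies in row K + i - 1, i.e. iff m + d < T, where the gap
   d = (alpha_s)_i - (alpha_s)_(i-1) is K - r + 1 if r divides i - 1 and 1 otherwise. *)

Lemma count_iota_ltn M n : count (fun c => c < M) (iota 0 n) = minn n M.
Proof.
elim: n => [|n IHn]; first by rewrite min0n.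
rewrite -[n.+1]addn1 iotaD count_cat IHn /=; lia.
Qed.

Lemma size_undup_filter_map (T : eqType) (f : nat -> T) (P : pred T) s :
  injective f -> uniq s ->
  size (undup [seq x <- map f s | P x]) = count (preim f P) s.
Proof.
move=> f_inj s_uniq.
by rewrite undup_id ?size_filter ?count_map // filter_uniq ?map_inj_uniq.
Qed.

Section Gasp.

Variables K L T r : nat.
Hypotheses (K_gt0 : 0 < K) (L_gt0 : 0 < L) (r_gt0 : 0 < r) (r_leK : r <= K).

Definition alpha_s_closed n := K * L + K * (n %/ r) + n %% r.

Lemma alpha_s_closed_small n : n < r -> alpha_s_closed n = K * L + n.
Proof. by move=> nr; rewrite /alpha_s_closed divn_small // modn_small // muln0 addn0. Qed.

Lemma alpha_s_closed_subr n : r <= n -> alpha_s_closed (n - r) + K = alpha_s_closed n.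
Proof.
move=> rn; rewrite /alpha_s_closed -{3 4}(subnK rn) divnDr // divnn r_gt0 modnDr; lia.
Qed.

Lemma alpha_s_closedS n :
  alpha_s_closed n.+1 = alpha_s_closed n + (if r %| n.+1 then K - r.-1 else 1).
Proof.
rewrite /alpha_s_closed divnS // modnS; case: ifP => [dvd_r | _]; last by lia.
have r_dvd_mod : r %| (n %% r).+1.
  by rewrite -(dvdn_addr _ (dvdn_mull (n %/ r) (dvdnn r))) addnS -divn_eq.
have := dvdn_leq (ltn0Sn _) r_dvd_mod; have := ltn_pmod n r_gt0; lia.
Qed.

Lemma ltn_alpha_s_closed [m n] : m < n -> alpha_s_closed m < alpha_s_closed n.
Proof.
elim: n => // n IHn; rewrite ltnS leq_eqVlt => /predU1P[-> | /IHn];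
  by rewrite alpha_s_closedS; case: ifP; lia.
Qed.

Lemma leq_alpha_s_closed [m n] : m <= n -> alpha_s_closed m <= alpha_s_closed n.
Proof. exact: (ltnW_homo ltn_alpha_s_closed). Qed.

Lemma alpha_s_closed_ltn_bound n : (alpha_s_closed n < K * L + K * T) = (n < r * T).
Proof.
have := ltn_pmod n r_gt0; rewrite /alpha_s_closed [r * T]mulnC -ltn_divLR //.
by case: (ltnP (n %/ r) T) => q_T; have := leq_mul (leqnn K) q_T; rewrite ?mulnS; lia.
Qed.

Lemma inS_alpha_s_closed B x : x < B ->
  inS K L r B x <-> exists n, x = alpha_s_closed n.
Proof.
move=> x_B; split.
- case/hasP => j; rewrite mem_iota => /andP[_ j_r] /hasP[t _ /eqP ->].
  exists (t * r + j).
  by rewrite /alpha_s_closed divnMDl ?modnMDl ?divn_small ?modn_small //; lia.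
- case=> n x_def; apply/hasP; exists (n %% r); first by rewrite mem_iota ltn_pmod.
  apply/hasP; exists (n %/ r); last by rewrite x_def /alpha_s_closed addnAC.
  rewrite mem_iota /=; apply: leq_ltn_trans x_B; rewrite x_def /alpha_s_closed.
  by have := leq_pmull (n %/ r) K_gt0; lia.
Qed.

Lemma alpha_s_enum :
  [seq x <- iota 0 (gasp_bound K L T) | inS K L r (gasp_bound K L T) x] =
  map alpha_s_closed (iota 0 (r * T)).
Proof.
apply: (irr_sorted_eq ltn_trans ltnn).
- exact/sorted_filter/iota_ltn_sorted/ltn_trans.
- exact/(homo_sorted ltn_alpha_s_closed)/iota_ltn_sorted.
move=> x; rewrite mem_filter mem_iota leq0n add0n andbC /gasp_bound.
apply/andP/mapP => [[x_B /(inS_alpha_s_closed _ _ x_B)[n x_def]] | [n]].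
  by exists n; rewrite // mem_iota -alpha_s_closed_ltn_bound -x_def.
rewrite mem_iota /= => n_lt ->.
have g_lt : alpha_s_closed n < K * L + K * T by rewrite alpha_s_closed_ltn_bound.
by split; last by apply/(inS_alpha_s_closed _ _ g_lt); exists n.
Qed.

Lemma alpha_sE n : n < T -> alpha_s K L T r n.+1 = alpha_s_closed n.
Proof.
move=> n_T; have T_le_rT := leq_pmull T r_gt0.
by rewrite /alpha_s alpha_s_enum (nth_map 0) ?nth_iota ?size_iota //=; lia.
Qed.

Lemma alpha_head k : k < K -> alpha K L T r k.+1 = k.
Proof. by rewrite /alpha => ->. Qed.

Lemma alpha_tail j : j < T -> alpha K L T r (K + j.+1) = alpha_s_closed j.
Proof. by move=> j_T; rewrite /alpha ifN ?addKn ?alpha_sE //; lia. Qed.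

Lemma betaE c : beta K L T c.+1 = if c < L then K * c else K * L + (c - L).
Proof. by rewrite /beta; case: ltnP => // L_c; rewrite subSn. Qed.

Definition beta_val y :=
  (exists2 c, c < L & y = K * c) \/ (exists2 m, m < T & y = K * L + m).

Lemma beta_valP y : beta_val y <-> exists2 c, c < L + T & y = beta K L T c.+1.
Proof.
split => [[[c c_L ->] | [m m_T ->]] | [c c_LT ->]].
- by exists c; rewrite ?betaE ?c_L //; lia.
- by exists (L + m); rewrite ?betaE ?ltn_add2l // ltnNge leq_addr addKn.
by rewrite betaE; case: ltnP => c_L; [left; exists c | right; exists (c - L)] => //; lia.
Qed.

Lemma head_sumP x : 0 < T ->
  (exists2 a, a < K & exists2 y, beta_val y & x = a + y) <-> x + 2 <= K * L + K + T.
Proof.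
move=> T_gt0; split => [[a a_K [y [[c c_L ->] | [m m_T ->]] ->]] | x_le].
- by have := leq_mul (leqnn K) c_L; rewrite mulnS; lia.
- by lia.
case: (ltnP x (K * L)) => x_KL.
  exists (x %% K); first exact: ltn_pmod.
  exists (K * (x %/ K)); last by rewrite addnC mulnC -divn_eq.
  by left; exists (x %/ K); rewrite // ltn_divLR // mulnC.
set a := minn (x - K * L) K.-1.
exists a; first by lia.
by exists (x - a); [right; exists (x - K * L - a) | ]; lia.
Qed.

Lemma mem_Pset n x : n < T ->
  x \in Pset K L T r n.+1 <->
  x + 2 <= K * L + K + T \/
  exists2 j, j < n & exists2 y, beta_val y & x = alpha_s_closed j + y.
Proof.
move=> n_T; rewrite -head_sumP; last by lia.
split.
- case/allpairsP => -[[|k] [|c]] /=; rewrite !mem_iota => -[k_bd c_bd ->]; try lia.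
  have beta_c : beta_val (beta K L T c.+1) by apply/beta_valP; exists c; lia.
  case: (ltnP k K) => k_K.
    by left; exists k => //; exists (beta K L T c.+1); rewrite ?alpha_head.
  right; exists (k - K); first by lia.
  exists (beta K L T c.+1); rewrite // -alpha_tail; last by lia.
  by congr (alpha _ _ _ _ _ + _); lia.
case=> [[a a_K [y /beta_valP[c c_bd ->] ->]] | [j j_n [y /beta_valP[c c_bd ->] ->]]].
  apply/allpairsP; exists (a.+1, c.+1); rewrite /= !mem_iota alpha_head //.
  by split => //; lia.
apply/allpairsP; exists (K + j.+1, c.+1); rewrite /= !mem_iota alpha_tail; last by lia.
by split => //; lia.
Qed.

Lemma Pset_L_small n c : n < r -> n < T -> c < L ->
  (alpha_s_closed n + K * c \in Pset K L T r n.+1) = (K * c + n + 2 <= K + T).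
Proof.
move=> n_r n_T c_L; have := leq_mul (leqnn K) c_L; rewrite mulnS => KcK_KL.
rewrite alpha_s_closed_small //; apply/idP/idP => [/(mem_Pset _ _ n_T) | ?]; last first.
  by apply/(mem_Pset _ _ n_T); left; lia.
case=> [| [j j_n [y [[c' _ ->] | [m _ ->]]]]]; first by lia.
  rewrite alpha_s_closed_small; last by lia.
  move=> eq_x; have : (c * K + n) %% K = (c' * K + j) %% K by congr (_ %% K); lia.
  by rewrite !modnMDl !modn_small; lia.
by rewrite alpha_s_closed_small; lia.
Qed.

Lemma Pset_L_big n c : r <= n -> n < T -> c < L ->
  alpha_s_closed n + K * c \in Pset K L T r n.+1.
Proof.
move=> r_n n_T c_L; apply/(mem_Pset _ _ n_T); right; exists (n - r); first by lia.
exists (K * c.+1); last by rewrite -alpha_s_closed_subr // mulnS; lia.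
case: (ltnP c.+1 L) => c1_L; first by left; exists c.+1.
by right; exists 0; rewrite ?addn0; [lia | congr (K * _); lia].
Qed.

Lemma Pset_R_first m : m < T ->
  (alpha_s_closed 0 + K * L + m \in Pset K L T r 1) = (K * L + m + 2 <= K + T).
Proof.
move=> m_T; have T_gt0 : 0 < T by lia.
rewrite alpha_s_closed_small //; apply/idP/idP => [/(mem_Pset _ _ T_gt0) | ?].
  by case=> [| [j]]; lia.
by apply/(mem_Pset _ _ T_gt0); left; lia.
Qed.

Lemma Pset_R_succ n m : n.+1 < T -> m < T ->
  (alpha_s_closed n.+1 + K * L + m \in Pset K L T r n.+2) =
  (m + alpha_s_closed n.+1 < T + alpha_s_closed n).
Proof.
move=> n_T m_T; have K_le_KL := leq_pmulr K L_gt0.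
have KL_le_g : K * L <= alpha_s_closed n by rewrite /alpha_s_closed -addnA leq_addr.
have g_le_gS := leq_alpha_s_closed (leqnSn n).
apply/idP/idP => [/(mem_Pset _ _ n_T) | ?]; last first.
  apply/(mem_Pset _ _ n_T); right; exists n => //.
  have [d d_def] : exists d, d = m + alpha_s_closed n.+1 - alpha_s_closed n by eexists.
  by exists (K * L + d); [right; exists d | ]; lia.
case=> [| [j /ltnSE j_n [y [[c c_L ->] | [m' m'_T ->]]]]]; first by lia.
  have := leq_alpha_s_closed (leqW j_n).
  by have := leq_mul (leqnn K) c_L; rewrite mulnS; lia.
by have := leq_alpha_s_closed j_n; lia.
Qed.

Lemma size_LsetE n : n < T ->
  size (Lset K L T r n.+1) =
  count (fun c => alpha_s_closed n + K * c \in Pset K L T r n.+1) (iota 0 L).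
Proof.
move=> n_T; rewrite /Lset (iotaDl 1 0) -map_comp.
rewrite (eq_in_map _ (fun c => alpha_s_closed n + K * c) _).1; last first.
  by move=> c; rewrite mem_iota /= => c_L; rewrite add1n alpha_sE // betaE c_L.
rewrite size_undup_filter_map ?iota_uniq // => c1 c2 /addnI /eqP.
by rewrite eqn_pmul2l // => /eqP.
Qed.

Lemma size_RsetE n : n < T ->
  size (Rset K L T r n.+1) =
  count (fun m => alpha_s_closed n + K * L + m \in Pset K L T r n.+1) (iota 0 T).
Proof.
move=> n_T; rewrite /Rset -[L + 1]addn0 iotaDl -map_comp.
rewrite (eq_in_map _ (fun m => alpha_s_closed n + K * L + m) _).1; last first.
  by move=> m _; rewrite /= alpha_sE // addn1 addSn betaE ltnNge leq_addr /= addKn addnA.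
by rewrite size_undup_filter_map ?iota_uniq // => m1 m2 /addnI.
Qed.

Lemma size_Lset_small n : n < r -> n < T ->
  size (Lset K L T r n.+1) = minn L ((K + T - 2 - n) %/ K).+1.
Proof.
move=> n_r n_T; rewrite size_LsetE // -count_iota_ltn.
apply: eq_in_count => c; rewrite mem_iota /= => c_L.
by rewrite Pset_L_small // ltnS leq_divRL //; lia.
Qed.

Lemma size_Lset_big n : r <= n -> n < T -> size (Lset K L T r n.+1) = L.
Proof.
move=> r_n n_T; rewrite size_LsetE // -[RHS](size_iota 0) -count_predT.
by apply: eq_in_count => c; rewrite mem_iota => c_L; apply: Pset_L_big.
Qed.

Lemma size_Rset_first : 0 < T -> size (Rset K L T r 1) = K + T - 1 - K * L.
Proof.
move=> T_gt0; have := leq_pmulr K L_gt0.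
rewrite size_RsetE // (eq_in_count (a2 := fun m => m < K + T - 1 - K * L)).
  by rewrite count_iota_ltn; lia.
by move=> m; rewrite mem_iota => m_T; rewrite Pset_R_first //; lia.
Qed.

Lemma size_Rset_succ n : n.+1 < T ->
  size (Rset K L T r n.+2) = T - (if r %| n.+1 then K - r.-1 else 1).
Proof.
move=> n_T; have := ltn_alpha_s_closed (ltnSn n).
rewrite size_RsetE // (eq_in_count (a2 := fun m =>
  m < T - (alpha_s_closed n.+1 - alpha_s_closed n))) ?count_iota_ltn.
  by rewrite alpha_s_closedS; case: ifP; lia.
by move=> m; rewrite mem_iota => m_T; rewrite Pset_R_succ //; lia.
Qed.

End Gasp.

Local Open Scope ring_scope.

Theorem lemma1 (K L T r : nat) :
  (0 < K)%N -> (0 < L)%N -> (0 < T)%N -> (L <= K)%N ->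
  (1 <= r)%N -> (r <= minn K T)%N ->
  forall i : nat, (1 <= i <= T)%N ->
    ((size (Lset K L T r i))%:Z =
       if (i <= r)%N
       then Num.min (L%:Z) (2 + ((T%:Z - 1 - i%:Z) %/ K%:Z)%Z)
       else L%:Z)
    /\
    ((size (Rset K L T r i))%:Z =
       if i == 1%N then Num.max 0 (K%:Z + T%:Z - K%:Z * L%:Z - 1)
       else if (i == 1 %[mod r])%N then Num.max 0 (T%:Z - K%:Z + r%:Z - 1)
       else T%:Z - 1).
Proof.
move=> K_gt0 L_gt0 T_gt0 _ r_gt0 r_min [|n] // /andP[_ n_T].
have [r_K r_T] : (r <= K /\ r <= T)%N by lia.
split.
  case: (leqP n.+1 r) => [n_r | r_n]; last by rewrite size_Lset_big.
  rewrite size_Lset_small //.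
  have -> : T%:Z - 1 - n.+1%:Z = (-1) * K%:Z + (K + T - 2 - n)%N%:Z by lia.
  by rewrite divzMDl ?divz_nat; lia.
have := leq_pmulr K L_gt0.
case: n n_T => [|n] n_T; first by rewrite size_Rset_first //=; nia.
rewrite size_Rset_succ // eqn_mod_dvd // subn1 /=.
by case: ifP; lia.
Qed.
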